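(* Let $p$ be an odd prime, $H\cong\mathbb{Z}_p^3$, and $\mathcal A$ an exceptional S-ring over $H$. Then $|\mathrm{Aut}(\mathcal A)|=p^4$ and $\mathrm{Iso}_1(\mathcal A)=\mathrm{Aut}(H)$.
   Context: $H$ is written additively (identity denoted $1$ in $\mathrm{Iso}_1$ means the zero element). $\mathrm{Cay}(H,S)$ is the digraph on $H$ with arcs $(x,x+s)$, $s\in S$. An S-ring over $H$ is a subalgebra $\mathcal A\subseteq\mathbb{Q}H$ spanned by $\underline{T}=\sum_{t\in T}t$ for $T$ in a partition $\mathrm{Bs}(\mathcal A)$ of $H$ (basic sets) with $\{0\}\in\mathrm{Bs}(\mathcal A)$ and $-T\in\mathrm{Bs}(\mathcal A)$ for all $T$. Two S-rings over groups $H,K$ are Cayley isomorphic if some group isomorphism $H\to K$ maps the basic sets of the first onto the basic sets of the second. $\mathcal A$ is exceptional if it is Cayley isomorphic to the S-ring over $\mathbb{Z}_p^3$ whose basic sets are the orbits of the cyclic group generated by the linear map given by the matrix $\begin{pmatrix}1&1&0\\0&1&1\\0&0&1\end{pmatrix}$. $\mathrm{Aut}(\mathcal A)=\bigcap_{T\in\mathrm{Bs}(\mathcal A)}\mathrm{Aut}(\mathrm{Cay}(H,T))$. $\mathrm{Iso}_1(\mathcal A)$ is the set of bijections $f:H\to H$ fixing $0$ such that $\{\mathrm{Cay}(H,T)^f:T\in\mathrm{Bs}(\mathcal A)\}=\{\mathrm{Cay}(H,S):S\in\mathrm{Bs}(\mathcal B)\}$ for some S-ring $\mathcal B$ over $H$.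 *)

From HB Require Import structures.
From mathcomp Require Import all_boot all_order all_fingroup all_algebra.
Set Implicit Arguments. Unset Strict Implicit. Unset Printing Implicit Defensive.
Import GRing.Theory.
Local Open Scope ring_scope.

Section SRing.
Variable H : finZmodType.

Definition setN (T : {set H}) : {set H} := [set - x | x in T].

(* Structure constant: number of pairs (a,b) in T1 x T2 with a + b = x,
   i.e. the coefficient of x in  underline(T1) * underline(T2)  in QH. *)
Definition sconst (T1 T2 : {set H}) (x : H) : nat :=
  #|[set u in setX T1 T2 | u.1 + u.2 == x]|.

(* P is the set of basic sets of an S-ring over H: a partition of H,
   containing {0}, closed under T |-> -T, and whose span in QH is closed under
   multiplication (each product underline(T1)*underline(T2) is constant on every
   basic set, i.e. is a linear combination of the underline(T3)). *)
Definition is_Sring (P : {set {set H}}) : Prop :=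
  [/\ partition P [set: H],
      [set 0] \in P,
      (forall T, T \in P -> setN T \in P) &
      (forall T1 T2 T3, T1 \in P -> T2 \in P -> T3 \in P ->
         forall x y, x \in T3 -> y \in T3 -> sconst T1 T2 x = sconst T1 T2 y)].

Definition Cay (T : {set H}) : {set H * H} := [set e | e.2 - e.1 \in T].

Definition digraph_img (f : {perm H}) (E : {set H * H}) : {set H * H} :=
  [set (f e.1, f e.2) | e in E].

(* Aut(A) = intersection of the Aut(Cay(H,T)), T basic *)
Definition AutS (P : {set {set H}}) : {set {perm H}} :=
  [set g : {perm H} | [forall T in P, forall x, forall y,
      ((y - x) \in T) == ((g y - g x) \in T)]].

Definition Iso1 (P : {set {set H}}) (f : {perm H}) : Prop :=
  f 0 = 0 /\
  exists Q : {set {set H}}, is_Sring Q /\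
    [set digraph_img f (Cay T) | T in P] = [set Cay S | S in Q].

Definition grp_iso (K : finZmodType) (f : H -> K) : Prop :=
  {morph f : x y / x + y} /\ bijective f.

End SRing.

(* The exceptional S-ring over Z_p^3 = column vectors over F_p. *)
Definition exc_mx (p : nat) : 'M['F_p]_3 :=
  \matrix_(i, j) (if (j == i :> nat) || (j == i.+1 :> nat) then 1 else 0).

(* orbit of v under the cyclic group <M>; since p is odd, M^p = 1, so
   <M> = {M^k | k < p} *)
Definition exc_orbit (p : nat) (v : 'cV['F_p]_3) : {set 'cV['F_p]_3} :=
  [set (exc_mx p ^+ k) *m v | k : 'I_p].

Definition exc_bs (p : nat) : {set {set 'cV['F_p]_3}} :=
  [set exc_orbit v | v : 'cV['F_p]_3].

Definition exceptional (H : finZmodType) (p : nat) (P : {set {set H}}) : Prop :=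
  exists f : H -> 'cV['F_p]_3, grp_iso f /\ [set f @: T | T : {set H} in P] = exc_bs p.

(* Transport everything to V = F_p^3 along the Cayley isomorphism: the basic
   sets become the orbits of the unipotent Jordan block M, which has order p
   because p is odd.  A map G of V with G y - G x in the M-orbit of y - x for
   all x, y is affine, G v = M^k v + G 0: after normalising G 0 = 0 and
   G e3 = e3, comparing G with e3 and then with e2 forces G to fix every vector.
   Hence Aut(A) consists of the p * p^3 maps v |-> M^k v + t.
   If f is in Iso_1(A), then, Cayley digraphs being translation invariant, each
   conjugate x |-> f^-1 (f x + s) of a translation lies in Aut(A).  These maps
   commute pairwise, and commuting with the ones whose translation parts are e3
   and e2 forces all their linear parts to be trivial, so f^-1, hence f, is
   additive.  Conversely an additive f maps A onto the S-ring f(A). *)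

From HB Require Import structures.
From mathcomp Require Import all_boot all_order all_fingroup all_algebra.
From mathcomp Require Import ring.
Set Implicit Arguments. Unset Strict Implicit. Unset Printing Implicit Defensive.
Import GRing.Theory.
Local Open Scope ring_scope.

Section AddMorphism.
Variables (U W : zmodType) (f : U -> W).
Hypothesis fD : {morph f : x y / x + y}.

Lemma addmorph0 : f 0 = 0.
Proof. by apply: (addrI (f 0)); rewrite -fD !addr0. Qed.

Lemma addmorphN : {morph f : x / - x}.
Proof. by move=> x; apply: (addrI (f x)); rewrite -fD !subrr addmorph0. Qed.

Lemma addmorphB : {morph f : x y / x - y}.
Proof. by move=> x y; rewrite fD addmorphN. Qed.

End AddMorphism.

Lemma eq0_of_eq_diff (R : zmodType) (a b c : R) : a = b -> b - a = c -> c = 0.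
Proof. by move=> -> <-; rewrite subrr. Qed.

Section SringMaps.
Variables (H : finZmodType) (P : {set {set H}}).

Definition Cay_endo (g : H -> H) :=
  forall T x y, T \in P -> y - x \in T -> g y - g x \in T.

Lemma AutS_Cay_endo g : g \in AutS P -> Cay_endo g.
Proof.
rewrite inE => /forall_inP gA T x y /gA /forallP /(_ x) /forallP /(_ y).
by move/eqP <-.
Qed.

Lemma Iso1_translation_endo f s : Iso1 P f -> Cay_endo (fun x => (f^-1)%g (f x + s)).
Proof.
case=> _ [Q [_ eQ]] T x y TP Txy.
have /imsetP [S _ eS] : digraph_img f (Cay T) \in [set Cay S | S in Q].
  by rewrite -eQ; apply: imset_f.
have /imsetP [[a b]] : (f x + s, f y + s) \in digraph_img f (Cay T).
  have : (f x, f y) \in digraph_img f (Cay T) by apply/imsetP; exists (x, y); rewrite ?inE.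
  by rewrite eS !inE /= opprD addrACA subrr addr0.
by rewrite inE /= => Tab [-> ->]; rewrite !permK.
Qed.

Section AdditivePerm.
Variables (f : {perm H}) (fD : {morph f : x y / x + y}).

Let mem_imf (T : {set H}) x : (f x \in f @: T) = (x \in T).
Proof. exact/mem_imset/perm_inj. Qed.

Lemma digraph_img_Cay T : digraph_img f (Cay T) = Cay (f @: T).
Proof.
apply/setP => -[a b]; rewrite [in RHS]inE /=; apply/imsetP/idP.
  by case=> -[x y]; rewrite inE /= => Txy [-> ->]; rewrite -(addmorphB fD) mem_imf.
move=> Tab; exists ((f^-1)%g a, (f^-1)%g b); last by rewrite /= !permKV.
by rewrite inE /= -mem_imf (addmorphB fD) !permKV.
Qed.

Lemma sconst_imset (A B : {set H}) z :
  sconst (f @: A) (f @: B) (f z) = sconst A B z.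
Proof.
pose ff (u : H * H) := (f u.1, f u.2).
have ff_inj : injective ff by move=> [a b] [c d] [/perm_inj -> /perm_inj ->].
rewrite /sconst -[RHS](card_imset _ ff_inj).
have -> : [set u in setX (f @: A) (f @: B) | u.1 + u.2 == f z] =
          ff @: [set u in setX A B | u.1 + u.2 == z].
  apply/setP => u.
  have -> : u = ff ((f^-1)%g u.1, (f^-1)%g u.2) by case: u => a b; rewrite /ff /= !permKV.
  by rewrite (mem_imset _ _ ff_inj) !inE /= !mem_imf -fD (inj_eq perm_inj).
by [].
Qed.

Lemma is_Sring_imset : is_Sring P -> is_Sring [set f @: T | T : {set H} in P].
Proof.
case=> P_part P0 PN Pconst; split.
- have <- : f @: [set: H] = [set: H].
    by apply/setP => x; rewrite -(permKV f x) mem_imf !in_setT.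
  by rewrite imset_partition //; exact: perm_inj.
- have <- : f @: [set 0] = [set 0] by rewrite imset_set1 (addmorph0 fD).
  exact: imset_f.
- move=> _ /imsetP [T TP ->].
  have -> : setN (f @: T) = f @: setN T.
    by rewrite /setN -!imset_comp; apply: eq_imset => x /=; rewrite (addmorphN fD).
  by apply: imset_f; apply: PN.
- move=> _ _ _ /imsetP [T1 T1P ->] /imsetP [T2 T2P ->] /imsetP [T3 T3P ->].
  move=> _ _ /imsetP [x Tx ->] /imsetP [y Ty ->].
  by rewrite !sconst_imset; apply: (Pconst T1 T2 T3).
Qed.

Lemma additive_Iso1 : is_Sring P -> Iso1 P f.
Proof.
move=> P_Sring; split; first exact: addmorph0 fD.
exists [set f @: T | T : {set H} in P]; split; first exact: is_Sring_imset.
by rewrite -imset_comp; apply: eq_imset => T /=; rewrite digraph_img_Cay.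
Qed.

End AdditivePerm.

End SringMaps.

Section Col3.
Variable R : zmodType.

Definition col3 (a b c : R) : 'cV[R]_3 := \col_(i < 3) [:: a; b; c]`_i.

Lemma col3P (v : 'cV[R]_3) : exists a b c, v = col3 a b c.
Proof.
exists (v ord0 0), (v (lift ord0 ord0) 0), (v ord_max 0).
apply/colP => -[[|[|[|]]] //] i_lt; rewrite mxE /=; congr (v _ _); exact: val_inj.
Qed.

Lemma col3_inj a b c a' b' c' :
  col3 a b c = col3 a' b' c' -> [/\ a = a', b = b' & c = c'].
Proof.
move/colP=> e.
by split; [move: (e ord0) | move: (e (lift ord0 ord0)) | move: (e ord_max)];
  rewrite !mxE.
Qed.

Lemma col3D a b c a' b' c' :
  col3 a b c + col3 a' b' c' = col3 (a + a') (b + b') (c + c').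
Proof. by apply/colP => -[[|[|[|]]] //] ?; rewrite !mxE. Qed.

Lemma col3N a b c : - col3 a b c = col3 (- a) (- b) (- c).
Proof. by apply/colP => -[[|[|[|]]] //] ?; rewrite !mxE. Qed.

Lemma col3B a b c a' b' c' :
  col3 a b c - col3 a' b' c' = col3 (a - a') (b - b') (c - c').
Proof. by rewrite col3N col3D. Qed.

End Col3.

Section Jordan3.
Variable R : comNzRingType.

Definition jordan3 : 'M[R]_3 :=
  \matrix_(i, j) (if (j == i :> nat) || (j == i.+1 :> nat) then 1 else 0).

Lemma jordan3_col3 a b c : jordan3 *m col3 a b c = col3 (a + b) (b + c) c.
Proof.
apply/colP => -[[|[|[|]]] //] ?; rewrite !mxE !big_ord_recl big_ord0 !mxE /=; ring.
Qed.

Lemma jordan3X_col3 k a b c :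
  jordan3 ^+ k *m col3 a b c =
  col3 (a + k%:R * b + 'C(k, 2)%:R * c) (b + k%:R * c) c.
Proof.
elim: k => [|k IH]; first by rewrite expr0 mul1mx bin0n !mul0r !addr0.
by rewrite exprS -mulmxE -mulmxA IH jordan3_col3 binS bin1 !natrD; congr col3; ring.
Qed.

End Jordan3.

Section ExceptionalOrbits.
Variable p : nat.
Hypotheses (p_pr : prime p) (p_odd : odd p).
Local Notation V := 'cV['F_p]_3.
Local Notation M := (exc_mx p).

Lemma Fp_nat_inj k j : (k < p)%N -> (j < p)%N -> (k%:R : 'F_p) = j%:R -> k = j.
Proof.
by move=> kp jp e; have := val_Fp_nat p_pr k; rewrite e val_Fp_nat // !modn_small.
Qed.

Lemma exc_mxX_col3 k a b c :
  M ^+ k *m col3 a b c = col3 (a + k%:R * b + 'C(k, 2)%:R * c) (b + k%:R * c) c.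
Proof. exact: jordan3X_col3. Qed.

(* Here oddness of p is used: p divides 'C(p, 2) only for p odd. *)
Lemma exc_mx_order : M ^+ p = 1.
Proof.
have binp2 : ('C(p, 2)%:R : 'F_p) = 0.
  apply/eqP; rewrite -(dvdn_pcharf (pchar_Fp p_pr)) prime_dvd_bin //.
  by have := prime_gt1 p_pr; case: (p) p_odd => [|[|[|]]].
have col_id j : col j (M ^+ p) = col j 1.
  rewrite !colE mul1mx; have [a [b [c ->]]] := col3P (delta_mx j 0 : V).
  by rewrite exc_mxX_col3 pchar_Fp_0 // binp2 !mul0r !addr0.
by apply/matrixP => i j; move: (congr1 (fun c : V => c i 0) (col_id j)); rewrite !mxE.
Qed.

Lemma exc_mxX_modp k : M ^+ k = M ^+ (k %% p).
Proof. by rewrite {1}(divn_eq k p) exprD mulnC exprM exc_mx_order expr1n mul1r. Qed.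

Lemma exc_mxXV k : M ^+ (p.-1 * k) * M ^+ k = 1.
Proof.
by rewrite -exprD -mulSnr prednK ?prime_gt0 // exprM exc_mx_order expr1n.
Qed.

Lemma exc_mxXK k (v : V) : M ^+ (p.-1 * k) *m (M ^+ k *m v) = v.
Proof. by rewrite mulmxA mulmxE exc_mxXV mul1mx. Qed.

Lemma exc_mxXKV k (v : V) : M ^+ k *m (M ^+ (p.-1 * k) *m v) = v.
Proof.
by rewrite mulmxA mulmxE -exprD addnC exprD exc_mxXV mul1mx.
Qed.

Lemma exc_orbitP (w v : V) :
  reflect (exists k : 'I_p, w = M ^+ k *m v) (w \in exc_orbit v).
Proof. by apply: (iffP imsetP) => [[k _ ->] | [k ->]]; exists k. Qed.

Lemma mem_exc_orbit k (v : V) : M ^+ k *m v \in exc_orbit v.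
Proof.
apply/exc_orbitP; exists (Ordinal (ltn_pmod k (prime_gt0 p_pr))).
by rewrite /= -exc_mxX_modp.
Qed.

Lemma exc_orbit_id (v : V) : v \in exc_orbit v.
Proof. by have := mem_exc_orbit 0 v; rewrite mul1mx. Qed.

Lemma exc_orbit_mulmxX k (v w : V) :
  (M ^+ k *m w \in exc_orbit v) = (w \in exc_orbit v).
Proof.
apply/idP/idP => /exc_orbitP [j ej].
  by rewrite -(exc_mxXK k w) ej mulmxA mulmxE -exprD mem_exc_orbit.
by rewrite ej mulmxA mulmxE -exprD mem_exc_orbit.
Qed.

Definition exc_orbit_preserving (G : V -> V) :=
  forall x y, G y - G x \in exc_orbit (y - x).

Lemma exc_orbit_preserving_rigid G : exc_orbit_preserving G ->
  G 0 = 0 -> G (col3 0 0 1) = col3 0 0 1 -> G =1 id.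
Proof.
move=> hG G0 Ge3.
have plane x y : G (col3 x y 0) = col3 x y 0.
  have /exc_orbitP [k ek] := hG 0 (col3 x y 0).
  rewrite G0 !subr0 exc_mxX_col3 in ek.
  have /exc_orbitP [j ej] := hG (col3 x y 0) (col3 0 0 1).
  rewrite Ge3 ek !col3B exc_mxX_col3 in ej; case/col3_inj: ej => E1 E2 _.
  have /(Fp_nat_inj (ltn_ord j) (prime_gt0 p_pr)) j0 : (j%:R : 'F_p) = 0%:R.
    by apply: (eq0_of_eq_diff E2); ring.
  rewrite j0 in E1.
  have ky0 : k%:R * y = 0 by apply: (eq0_of_eq_diff E1); rewrite !mul0r; ring.
  by rewrite ek ky0 !mulr0 !addr0.
move=> v /=; have [x [y [z ->]]] := col3P v.
have [-> | z_neq0] := eqVneq z 0; first exact: plane.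
have /exc_orbitP [k ek] := hG 0 (col3 x y z); rewrite G0 !subr0 exc_mxX_col3 in ek.
have /exc_orbitP [j ej] := hG (col3 0 1 0) (col3 x y z).
rewrite plane ek !col3B exc_mxX_col3 in ej; case/col3_inj: ej => E1 E2 _.
have /eqP : (j%:R - k%:R) * z = 0 by apply: (eq0_of_eq_diff E2); ring.
rewrite mulf_eq0 (negPf z_neq0) orbF subr_eq0 => /eqP.
move/(Fp_nat_inj (ltn_ord j) (ltn_ord k)) => jk; rewrite jk in E1.
have /eqP : - k%:R = 0 :> 'F_p by apply: (eq0_of_eq_diff E1); ring.
rewrite oppr_eq0 => /eqP /(Fp_nat_inj (ltn_ord k) (prime_gt0 p_pr)) k0.
by rewrite ek k0 !mul0r !addr0.
Qed.

Lemma exc_orbit_preserving_affine G : exc_orbit_preserving G ->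
  exists k : 'I_p, forall v, G v = M ^+ k *m v + G 0.
Proof.
move=> hG; have /exc_orbitP [k ek] := hG 0 (col3 0 0 1); rewrite subr0 in ek.
pose G' v := M ^+ (p.-1 * k) *m (G v - G 0).
have hG' : exc_orbit_preserving G'.
  move=> x y; rewrite /G' -mulmxBr opprB addrA subrK exc_orbit_mulmxX; exact: hG.
have G'id : G' =1 id.
  by apply: exc_orbit_preserving_rigid; rewrite /G' ?ek ?subrr ?mulmx0 ?exc_mxXK.
by exists k => v; rewrite -[v in RHS]G'id /G' exc_mxXKV subrK.
Qed.

Lemma exc_mxX_fixes_e2 (k : 'I_p) :
  M ^+ k *m col3 0 1 0 = col3 0 1 0 -> k = 0 :> nat.
Proof.
rewrite exc_mxX_col3 => /col3_inj [ek _ _].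
apply: (Fp_nat_inj (ltn_ord k) (prime_gt0 p_pr)).
by move: ek; rewrite mulr1 mulr0 addr0 add0r.
Qed.

Lemma exc_mxX_comm_e3_e2 (a b : 'I_p) :
  M ^+ a *m col3 0 0 1 + col3 0 1 0 = M ^+ b *m col3 0 1 0 + col3 0 0 1 ->
  a = 0 :> nat.
Proof.
rewrite !exc_mxX_col3 !col3D => /col3_inj [_ ea _].
apply: (Fp_nat_inj (ltn_ord a) (prime_gt0 p_pr)).
by apply: (eq0_of_eq_diff (esym ea)); ring.
Qed.

End ExceptionalOrbits.

Section CayleyIsomorphicToExceptional.
Variables (p : nat) (H : finZmodType) (P : {set {set H}}).
Variables (F : H -> 'cV['F_p]_3) (Finv : 'cV['F_p]_3 -> H).
Hypotheses (p_pr : prime p) (p_odd : odd p).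
Hypotheses (FD : {morph F : x y / x + y}) (FK : cancel F Finv) (FiK : cancel Finv F).
Hypothesis P_exc : [set F @: T | T : {set H} in P] = exc_bs p.
Local Notation M := (exc_mx p).

Lemma mem_imF (T : {set H}) x : (F x \in F @: T) = (x \in T).
Proof. exact/mem_imset/(can_inj FK). Qed.

Lemma orbit_of_basic_set T : T \in P -> exists v, F @: T = exc_orbit v.
Proof.
move=> TP; have /imsetP [v _ ->] : F @: T \in exc_bs p by rewrite -P_exc; apply: imset_f.
by exists v.
Qed.

Lemma basic_set_of_orbit v : exists2 T, T \in P & F @: T = exc_orbit v.
Proof.
have /imsetP [T TP eT] : exc_orbit v \in [set F @: T | T : {set H} in P].
  by rewrite P_exc; apply: imset_f.
by exists T.
Qed.

Lemma Cay_endo_affine g : Cay_endo P g ->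
  exists k : 'I_p, forall x, F (g x) = M ^+ k *m F x + F (g 0).
Proof.
move=> g_endo; pose G v := F (g (Finv v)).
have G_pres : exc_orbit_preserving G.
  move=> v w; have [T TP eT] := basic_set_of_orbit (w - v).
  have : Finv w - Finv v \in T.
    by rewrite -mem_imF (addmorphB FD) !FiK eT exc_orbit_id.
  by move/(g_endo T _ _ TP); rewrite -mem_imF (addmorphB FD) eT.
have [k Gk] := exc_orbit_preserving_affine p_pr p_odd G_pres.
exists k => x; have := Gk (F x); rewrite /G FK -(addmorph0 FD) FK //.
Qed.

Lemma exc_affine_subproof (k : nat) (t : 'cV['F_p]_3) :
  injective (fun x => Finv (M ^+ k *m F x + t)).
Proof.
move=> x y /(can_inj FiK)/addIr/(congr1 (mulmx (M ^+ (p.-1 * k)))).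
by rewrite !(exc_mxXK p_pr p_odd) => /(can_inj FK).
Qed.

Definition exc_affine (kt : 'I_p * 'cV['F_p]_3) : {perm H} :=
  perm (@exc_affine_subproof kt.1 kt.2).

Lemma exc_affineE kt x : F (exc_affine kt x) = M ^+ kt.1 *m F x + kt.2.
Proof. by rewrite permE FiK. Qed.

Lemma exc_affine_AutS kt : exc_affine kt \in AutS P.
Proof.
rewrite inE; apply/forall_inP => T TP; apply/forallP => x; apply/forallP => y.
have [v ev] := orbit_of_basic_set TP.
rewrite -!mem_imF !(addmorphB FD) !exc_affineE ev.
by rewrite opprD addrACA subrr addr0 -mulmxBr exc_orbit_mulmxX.
Qed.

Lemma AutS_exc_affine : AutS P = exc_affine @: setT.
Proof.
apply/setP => g; apply/idP/imsetP => [gA | [kt _ ->]]; last exact: exc_affine_AutS.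
have [k gk] := Cay_endo_affine (AutS_Cay_endo gA).
by exists (k, F (g 0)) => //; apply/permP => x; apply: (can_inj FK); rewrite exc_affineE gk.
Qed.

Lemma exc_affine_inj : injective exc_affine.
Proof.
move=> [k t] [k' t'] e.
have := congr1 (fun g : {perm H} => F (g 0)) e.
rewrite !exc_affineE (addmorph0 FD) !mulmx0 !add0r /= => tt'; subst t'.
have := congr1 (fun g : {perm H} => F (g (Finv (col3 0 0 1)))) e.
rewrite !exc_affineE FiK /= => /addIr; rewrite !exc_mxX_col3 => /col3_inj [_ ek _].
congr (_, _); apply/val_inj/(Fp_nat_inj p_pr (ltn_ord k) (ltn_ord k')).
by move: ek; rewrite !mulr1 !add0r.
Qed.

Lemma card_AutS : #|AutS P| = (p ^ 4)%N.
Proof.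
rewrite AutS_exc_affine card_imset; last exact: exc_affine_inj.
by rewrite cardsT card_prod card_ord card_mx card_Fp // muln1 -expnS.
Qed.

Lemma Iso1_additive f : Iso1 P f -> {morph f : x y / x + y}.
Proof.
move=> f_iso; have f0 : f 0 = 0 by case: f_iso.
pose g s x := (f^-1)%g (f x + s).
have gC s u x : g s (g u x) = g u (g s x) by rewrite /g !permKV addrAC.
have Fg0 v : F (g (f (Finv v)) 0) = v by rewrite /g f0 add0r permK FiK.
have affine s : exists k : 'I_p, forall x, F (g s x) = M ^+ k *m F x + F (g s 0).
  exact: Cay_endo_affine (Iso1_translation_endo s f_iso).
pose e2 := f (Finv (col3 0 1 0)); pose e3 := f (Finv (col3 0 0 1)).
have [a ga] := affine e2; have [b gb] := affine e3.
have a0 : a = 0 :> nat.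
  apply: (exc_mxX_comm_e3_e2 p_pr (b := b)).
  by have := ga (g e3 0); rewrite gC gb !Fg0 => ->.
have translation s x : g s x = x + g s 0.
  have [c gc] := affine s.
  have c0 : c = 0 :> nat.
    apply: (exc_mxX_fixes_e2 p_pr); apply: (addIr (F (g s 0))).
    by have := gc (g e2 0); rewrite gC ga a0 mul1mx !Fg0 => <-; rewrite addrC.
  by apply: (can_inj FK); rewrite gc c0 mul1mx FD.
move=> x y; have := translation (f y) x; rewrite /g f0 add0r permK => <-.
by rewrite permKV.
Qed.

End CayleyIsomorphicToExceptional.

Theorem lemma2p17 (p : nat) (H : finZmodType) (P : {set {set H}}) :
  prime p -> odd p ->
  (exists f : H -> 'cV['F_p]_3, grp_iso f) ->
  is_Sring P -> exceptional p P ->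
  #|AutS P| = (p ^ 4)%N /\
  (forall f : {perm H}, Iso1 P f <-> {morph f : x y / x + y}).
Proof.
(* The isomorphism hypothesis is subsumed by [exceptional p P]. *)
move=> p_pr p_odd _ P_Sring [F [[FD [Finv FK FiK]] P_exc]].
split; first exact: card_AutS p_pr p_odd FD FK FiK P_exc.
move=> f; split; first exact: (Iso1_additive p_pr p_odd FD FK FiK P_exc).
by move=> fD; exact: additive_Iso1 fD P_Sring.
Qed.
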